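(* Let $W$ and $V$ be B-DMCs which are symmetric, symmetrized under the same permutation. Then for every $N=2^n$ and $i\in\{1,\dots,N\}$, $Z_{2N}^{(2i)}(W,V)=\big(Z_N^{(i)}(W,V)\big)^2$. Consequently, $Z_N^{(i)}(W,V)-Z_N^{(i)}(V)\le0$ implies $Z_{2N}^{(2i)}(W,V)-Z_{2N}^{(2i)}(V)\le0$.
   Context: A B-DMC $W:\{0,1\}\to\mathcal Y$ is given by transition probabilities $W(y|x)$, $\mathcal Y$ finite; $L_W(y)=W(y|1)/W(y|0)$. $W,V$ are ''symmetric, symmetrized under the same permutation'' if there is an involutive permutation $\pi$ of $\mathcal Y$ with $W(y|1)=W(\pi(y)|0)$, $V(y|1)=V(\pi(y)|0)$ for all $y$. For a B-DMC $W$: $W^-(y_1y_2|u_1)=\sum_{u_2}\tfrac12W(y_1|u_1\oplus u_2)W(y_2|u_2)$ and $W^+(y_1y_2u_1|u_2)=\tfrac12W(y_1|u_1\oplus u_2)W(y_2|u_2)$. Synthetic channels: $W_1^{(1)}=W$, $W_{2N}^{(2i-1)}=(W_N^{(i)})^-$, $W_{2N}^{(2i)}=(W_N^{(i)})^+$ (and likewise for $V$). Mismatched Bhattacharyya parameter: for B-DMCs $W,V$ on the same output alphabet $\mathcal Y$, $Z(W,V)=\sum_{y\in\mathcal Y}W(y|0)\sqrt{L_V(y)}$; $Z_N^{(i)}(W,V)=Z(W_N^{(i)},V_N^{(i)})$ and $Z_N^{(i)}(V)=Z_N^{(i)}(V,V)$. *)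

From HB Require Import structures.
From mathcomp Require Import all_boot all_order all_algebra.
Set Implicit Arguments. Unset Strict Implicit. Unset Printing Implicit Defensive.
Import Order.TTheory GRing.Theory Num.Theory.
Local Open Scope ring_scope.

(* A channel with input {0,1} = bool (false = 0, true = 1) and finite output
   alphabet Y is a map  W : bool -> Y -> R  with  W x y = W(y|x). *)

Definition is_BDMC (R : rcfType) (Y : finType) (W : bool -> Y -> R) : Prop :=
  (forall x y, 0 <= W x y) /\ (forall x, \sum_(y : Y) W x y = 1).

Definition sym_same_perm (R : rcfType) (Y : finType) (W V : bool -> Y -> R) : Prop :=
  exists pi : Y -> Y, involutive pi /\
    (forall y, W true y = W false (pi y)) /\ (forall y, V true y = V false (pi y)).

(* likelihood ratio L_W(y) = W(y|1)/W(y|0)  (with MathComp's convention x/0 = 0) *)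
Definition LR (R : rcfType) (Y : finType) (W : bool -> Y -> R) (y : Y) : R :=
  W true y / W false y.

Definition Zmis (R : rcfType) (Y : finType) (W V : bool -> Y -> R) : R :=
  \sum_(y : Y) W false y * Num.sqrt (LR V y).

Definition chminus (R : rcfType) (Y : finType) (W : bool -> Y -> R)
  : bool -> (Y * Y)%type -> R :=
  fun u1 y => \sum_(u2 : bool) 2^-1 * W (u1 (+) u2) y.1 * W u2 y.2.

(* W^+(y1 y2 u1 | u2) = 1/2 W(y1|u1+u2) W(y2|u2); output ((y1,y2),u1) *)
Definition chplus (R : rcfType) (Y : finType) (W : bool -> Y -> R)
  : bool -> (Y * Y * bool)%type -> R :=
  fun u2 y => 2^-1 * W (y.2 (+) u2) y.1.1 * W u2 y.1.2.

Record chpair (R : rcfType) := ChPair {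
  cp_Y : finType;
  cp_W : bool -> cp_Y -> R;
  cp_V : bool -> cp_Y -> R }.
Arguments cp_W {R} c _ _.
Arguments cp_V {R} c _ _.

Definition pminus (R : rcfType) (c : chpair R) : chpair R :=
  @ChPair R (cp_Y c * cp_Y c)%type (chminus (cp_W c)) (chminus (cp_V c)).

Definition pplus (R : rcfType) (c : chpair R) : chpair R :=
  @ChPair R (cp_Y c * cp_Y c * bool)%type (chplus (cp_W c)) (chplus (cp_V c)).

(* synth n i c = ((W_N^{(i)}), (V_N^{(i)})) for N = 2^n and 1 <= i <= N, where
   c = (W, V):  W_1^{(1)} = W, W_{2N}^{(2i-1)} = (W_N^{(i)})^-, W_{2N}^{(2i)} = (W_N^{(i)})^+. *)
Fixpoint synth (R : rcfType) (n i : nat) (c : chpair R) : chpair R :=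
  match n with
  | 0 => c
  | n'.+1 => if odd i then pminus (synth n' (i.+1)./2 c) else pplus (synth n' i./2 c)
  end.

Definition ZN (R : rcfType) (Y : finType) (W V : bool -> Y -> R) (n i : nat) : R :=
  let c := synth n i (@ChPair R Y W V) in Zmis (cp_W c) (cp_V c).

From HB Require Import structures.
From mathcomp Require Import all_boot all_order all_algebra.
From mathcomp Require Import ring.
Import Order.TTheory GRing.Theory Num.Theory.
Local Open Scope ring_scope.
Set Implicit Arguments. Unset Strict Implicit.

(* Call a channel pair (W,V) symmetric when both channels are
   nonnegative and one involution pi of the output alphabet flips the input of
   both: W(pi y|u) = W(y|~u), V(pi y|u) = V(y|~u).  This property is preserved
   by the minus and plus transforms, hence by every synthetic channel pair.
   For a symmetric pair, the summand of Z(W^+,V^+) at output ((y1,y2),u)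
   factors as 1/2 * [W(y1|u) sqrt(V(y1|~u)/V(y1|u))] * [W(y2|0) sqrt(L_V(y2))];
   summing over y2 gives Z(W,V), and summing over (y1,u) gives 2 Z(W,V),
   because the u = 1 part equals Z(W,V) after reindexing by pi.  Hence
   Z(W^+,V^+) = Z(W,V)^2, and since W_{2N}^{(2i)} = (W_N^{(i)})^+ this is the
   identity of the theorem.  The comparison Z(W,V) <= Z(V) then transfers to
   the squares because both quantities are nonnegative. *)

Section SymmetricPairs.
Variable R : rcfType.

Definition sym_pair (c : chpair R) : Prop :=
  (forall u y, 0 <= cp_W c u y) /\ (forall u y, 0 <= cp_V c u y) /\
  exists pi : cp_Y c -> cp_Y c, involutive pi /\
    (forall u y, cp_W c u (pi y) = cp_W c (~~ u) y) /\
    (forall u y, cp_V c u (pi y) = cp_V c (~~ u) y).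

Lemma addbNr (a b : bool) : a (+) ~~ b = ~~ (a (+) b).
Proof. by case: a; case: b. Qed.

Lemma flip_of_sym (Y : finType) (W : bool -> Y -> R) (pi : Y -> Y) :
  involutive pi -> (forall y, W true y = W false (pi y)) ->
  forall u y, W u (pi y) = W (~~ u) y.
Proof.
by move=> piK HW [] y; rewrite ?HW ?piK // -[in RHS](piK y) HW piK.
Qed.

Lemma sym_pair_init (Y : finType) (W V : bool -> Y -> R) :
  is_BDMC W -> is_BDMC V -> sym_same_perm W V ->
  sym_pair (ChPair W V) /\ sym_pair (ChPair V V).
Proof.
move=> [W0 _] [V0 _] [pi [piK [HW HV]]].
have fW := flip_of_sym piK HW; have fV := flip_of_sym piK HV.
by split; (split; [done | split; [done | exists pi]]).
Qed.

Lemma chminus_ge0 (Y : finType) (W : bool -> Y -> R) :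
  (forall u y, 0 <= W u y) -> forall u y, 0 <= chminus W u y.
Proof.
by move=> W0 u y; apply: sumr_ge0 => v _; rewrite !mulr_ge0 ?invr_ge0 ?ler0n.
Qed.

Lemma chplus_ge0 (Y : finType) (W : bool -> Y -> R) :
  (forall u y, 0 <= W u y) -> forall u y, 0 <= chplus W u y.
Proof. by move=> W0 u y; rewrite !mulr_ge0 ?invr_ge0 ?ler0n. Qed.

(* The minus transform is symmetric under pi acting on the first output. *)
Lemma sym_pair_minus (c : chpair R) : sym_pair c -> sym_pair (pminus c).
Proof.
case: c => Y W V [/= W0 [V0 [pi [piK [HW HV]]]]].
split; first exact: chminus_ge0.
split; first exact: chminus_ge0.
exists (fun p => (pi p.1, p.2)); split; first by case=> a b /=; rewrite piK.
by split=> u [a b]; apply: eq_bigr => v _; rewrite /= ?HW ?HV addbC -addbNr addbC.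
Qed.

(* The plus transform is symmetric under pi acting on both channel outputs. *)
Lemma sym_pair_plus (c : chpair R) : sym_pair c -> sym_pair (pplus c).
Proof.
case: c => Y W V [/= W0 [V0 [pi [piK [HW HV]]]]].
split; first exact: chplus_ge0.
split; first exact: chplus_ge0.
exists (fun p => (pi p.1.1, pi p.1.2, p.2)).
split; first by case=> [[a b] d] /=; rewrite !piK.
by split=> u [[a b] d]; rewrite /= /chplus /= ?HW ?HV addbNr.
Qed.

Lemma sym_pair_synth n i (c : chpair R) : sym_pair c -> sym_pair (synth n i c).
Proof.
elim: n i c => [//|n IH] i c Hc /=.
by case: (odd i); [apply: sym_pair_minus | apply: sym_pair_plus]; apply: IH.
Qed.

Lemma Zmis_ge0 (Y : finType) (W V : bool -> Y -> R) :
  (forall u y, 0 <= W u y) -> 0 <= Zmis W V.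
Proof. by move=> W0; apply: sumr_ge0 => y _; rewrite mulr_ge0 ?sqrtr_ge0. Qed.

Definition sqrt_lr (Y : finType) (V : bool -> Y -> R) (u : bool) (y : Y) : R :=
  Num.sqrt (V (~~ u) y / V u y).

Lemma Zmis_flip (c : chpair R) : sym_pair c ->
  \sum_y cp_W c true y * sqrt_lr (cp_V c) true y = Zmis (cp_W c) (cp_V c).
Proof.
case: c => Y W V [/= _ [_ [pi [piK [HW HV]]]]].
rewrite (reindex_inj (can_inj piK)); apply: eq_bigr => y _.
by rewrite /sqrt_lr /LR /= HW HV HV.
Qed.

Lemma sqrt_lr_plus (Y : finType) (V : bool -> Y -> R) y1 y2 u :
  (forall u y, 0 <= V u y) ->
  Num.sqrt (LR (chplus V) (y1, y2, u)) = sqrt_lr V u y1 * sqrt_lr V false y2.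
Proof.
move=> V0; rewrite /LR /chplus /sqrt_lr /= addbF addbT -sqrtrM ?divr_ge0 //.
have h2 : (2^-1 : R) / 2^-1 = 1 by rewrite mulfV // invr_eq0 pnatr_eq0.
congr Num.sqrt; rewrite !invfM.
transitivity (2^-1 / 2^-1 * (V (~~ u) y1 / V u y1 * (V true y2 / V false y2)));
  by [ring | rewrite h2 mul1r].
Qed.

Lemma Zmis_plus (c : chpair R) : sym_pair c ->
  Zmis (cp_W (pplus c)) (cp_V (pplus c)) = Zmis (cp_W c) (cp_V c) ^+ 2.
Proof.
move=> Hc; have flip := Zmis_flip Hc.
case: c Hc flip => Y W V [/= _ [V0 _]] /= flip.
set Z := Zmis W V.
(* G u y1 y2 is the factored summand of Z(W^+,V^+) at output ((y1,y2),u). *)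
pose G u y1 y2 := 2^-1 * (W u y1 * sqrt_lr V u y1) * (W false y2 * sqrt_lr V false y2).
have term p : chplus W false p * Num.sqrt (LR (chplus V) p) = G p.2 p.1.1 p.1.2.
  by case: p => [[y1 y2] u]; rewrite sqrt_lr_plus // /G /chplus /= addbF; ring.
have inner u y1 : \sum_y2 G u y1 y2 = 2^-1 * (W u y1 * sqrt_lr V u y1) * Z.
  by rewrite -mulr_sumr.
have base : \sum_y W false y * sqrt_lr V false y = Z by [].
rewrite /Zmis (eq_bigr _ (fun p _ => term p)).
rewrite -(pair_bigA _ (fun yy u => G u yy.1 yy.2)).
rewrite -(pair_bigA _ (fun y1 y2 => \sum_u G u y1 y2)) /=.
under eq_bigr do rewrite exchange_big /= (eq_bigr _ (fun u _ => inner u _)).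
rewrite exchange_big big_bool /= -!mulr_suml -!mulr_sumr flip base -/Z.
have h : (2^-1 : R) * 2 = 1 by rewrite mulVf // pnatr_eq0.
by transitivity (2^-1 * 2 * Z ^+ 2); [ring | rewrite h mul1r].
Qed.

Lemma synth_even n i (c : chpair R) : synth n.+1 i.*2 c = pplus (synth n i c).
Proof. by rewrite /= odd_double doubleK. Qed.

Lemma ZN_even (Y : finType) (W V : bool -> Y -> R) n i :
  sym_pair (ChPair W V) -> ZN W V n.+1 i.*2 = ZN W V n i ^+ 2.
Proof. by move=> Hc; rewrite /ZN synth_even Zmis_plus //; apply: sym_pair_synth. Qed.

Lemma ZN_ge0 (Y : finType) (W V : bool -> Y -> R) n i :
  sym_pair (ChPair W V) -> 0 <= ZN W V n i.
Proof. by move=> /(sym_pair_synth n i) [W0 _]; apply: Zmis_ge0. Qed.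

End SymmetricPairs.

Theorem mainTheorem11 (R : rcfType) (Y : finType) (W V : bool -> Y -> R) :
  is_BDMC W -> is_BDMC V -> sym_same_perm W V ->
  forall (n i : nat), (1 <= i <= 2 ^ n)%N ->
    ZN W V n.+1 (i.*2) = ZN W V n i ^+ 2 /\
    (ZN W V n i - ZN V V n i <= 0 -> ZN W V n.+1 (i.*2) - ZN V V n.+1 (i.*2) <= 0).
Proof.
move=> BW BV sym n i _.
have [symWV symVV] := sym_pair_init BW BV sym.
rewrite !ZN_even // !subr_le0; split=> // le_ZW_ZV.
by rewrite ler_pXn2r // nnegrE ZN_ge0.
Qed.
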